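(* Let $X$ be an SL-space with spatial part $Y$, and let $U\subseteq X$. Then $U$ is a clopen Scott upset of $X$ if and only if there is a compact open subset $V$ of $Y$ such that $\mathrm{cl}\,V=U$ (closure taken in $X$).
   Context: A Priestley space is a Stone space $X$ with a partial order such that clopen upsets separate points. An L-space is a Priestley space in which the downset of each clopen set is clopen and the closure of each open upset is open. The spatial part of $X$ is $Y=\{y\in X\mid{\downarrow}y\text{ is clopen}\}$, topologized by declaring $V\subseteq Y$ open iff $V=U\cap Y$ for some clopen upset $U$ of $X$. $X$ is an SL-space if $Y$ is dense in $X$. A Scott upset of $X$ is a closed upset $F$ with $\min F\subseteq Y$. *)

From mathcomp Require Import all_boot all_order.
From mathcomp Require Import all_classical all_reals all_analysis.
Set Implicit Arguments. Unset Strict Implicit. Unset Printing Implicit Defensive.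
Local Open Scope classical_set_scope.

Section PriestleyDefs.
Context {T : topologicalType} (le : T -> T -> Prop).

Definition partial_order :=
  [/\ (forall x, le x x), (forall x y, le x y -> le y x -> x = y)
    & (forall x y z, le x y -> le y z -> le x z)].

Definition is_upset (A : set T) := forall x y, A x -> le x y -> A y.
Definition downset (A : set T) : set T := [set x | exists2 y, A y & le x y].
Definition downset1 (x : T) : set T := downset [set x].

Definition stone_space := [/\ compact [set: T], hausdorff_space T & zero_dimensional T].

Definition priestley_space :=
  [/\ stone_space, partial_order
    & forall x y, ~ le x y -> exists U, [/\ clopen U, is_upset U, U x & ~ U y]].

Definition L_space :=
  [/\ priestley_space,
      (forall U, clopen U -> clopen (downset U))
    & (forall U, open U -> is_upset U -> open (closure U))].

Definition spatial : set T := [set y | clopen (downset1 y)].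

Definition Y_open (V : set T) :=
  exists U, [/\ clopen U, is_upset U & V = U `&` spatial].

Definition Y_compact (V : set T) :=
  forall (I : Type) (W : I -> set T), (forall i, Y_open (W i)) ->
    V `<=` \bigcup_i W i ->
    exists2 D : set I, finite_set D & V `<=` \bigcup_(i in D) W i.

Definition Y_compact_open (V : set T) :=
  [/\ V `<=` spatial, Y_open V & Y_compact V].

Definition SL_space := L_space /\ closure spatial = [set: T].

Definition minimal (F : set T) : set T :=
  [set x | F x /\ forall z, F z -> le z x -> z = x].

Definition scott_upset (F : set T) :=
  [/\ closed F, is_upset F & minimal F `<=` spatial].

End PriestleyDefs.

From mathcomp Require Import all_boot all_order.
From mathcomp Require Import all_classical all_reals all_analysis.
Local Open Scope classical_set_scope.

(* If U is a clopen Scott upset, every point of U lies above a minimal point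
   of U (Zorn's lemma, chains having lower bounds by compactness), and minimal
   points lie in Y; so if traces on Y of clopen upsets cover U ∩ Y, the upsets
   themselves cover the compact set U.  Conversely, if W is a clopen
   upset with W ∩ Y compact in Y and m is a minimal point of W outside Y,
   Priestley separation gives clopen upsets around the points of W ∩ Y missing
   m; finitely many of them cover W ∩ Y, so W minus their union is an open
   neighbourhood of m missing Y, against density.  In both directions
   cl (W ∩ Y) = W by density. *)

Lemma compact_finite_subcover (T : topologicalType) (A : set T) (I : Type)
    (f : I -> set T) :
  compact A -> (forall i, open (f i)) -> A `<=` \bigcup_i f i ->
  exists2 D : set I, finite_set D & A `<=` \bigcup_(i in D) f i.
Proof.
move=> cA of_ Acov; apply: contrapT => noD.
pose G := filter_from [set D : set I | finite_set D]
  (fun D => A `\` \bigcup_(i in D) f i).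
have FG : Filter G.
  apply: filter_from_filter; first by exists set0; exact: finite_set0.
  move=> D1 D2 fD1 fD2; exists (D1 `|` D2); first by rewrite /= finite_setU.
  move=> x [Ax nx]; split; split => // -[i Di fx]; apply: nx; exists i => //.
  - by left.
  - by right.
have PG : ProperFilter G.
  apply: filter_from_proper => // D fD; apply: contrapT => AD0.
  apply: noD; exists D => // x Ax; apply: contrapT => nx; apply: AD0.
  by exists x.
have GA : G A by exists set0; [exact: finite_set0 | move=> x []].
have [p [Ap clp]] := cA G PG GA.
have [i _ fip] := Acov p Ap.
have GAi : G (A `\` f i).
  exists [set i]; first exact: finite_set1.
  by move=> x [Ax nx]; split => // fx; apply: nx; exists i.
by have [z [[_ nfiz] fiz]] := clp _ _ GAi (open_nbhs_nbhs (conj (of_ i) fip)).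
Qed.

Lemma closure_clopenI_dense (T : topologicalType) (Y W : set T) :
  closure Y = setT -> clopen W -> closure (W `&` Y) = W.
Proof.
move=> clY [oW cW]; apply/seteqP; split.
  by move=> p /(closureS (@subIsetl _ W Y)); apply: cW.
move=> p Wp B Bp; have nWB : nbhs p (W `&` B).
  by apply: filterI Bp; exact: open_nbhs_nbhs.
have : closure Y p by rewrite clY.
by move=> /(_ _ nWB) [z [Yz [Wz Bz]]]; exists z.
Qed.

Lemma closureT_dense (T : topologicalType) (Y : set T) :
  closure Y = setT -> dense Y.
Proof.
move=> clY O [x Ox] oO; have : closure Y x by rewrite clY.
by move=> /(_ _ (open_nbhs_nbhs (conj oO Ox))); rewrite setIC.
Qed.

Section PriestleySpace.
Variables (T : topologicalType) (le : T -> T -> Prop).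
Hypothesis PS : priestley_space le.

Lemma closed_downset1 (a : T) : closed (downset1 le a).
Proof.
have [_ _ sep] := PS; move=> p clp; apply: contrapT => np.
have npa : ~ le p a by move=> pa; apply: np; exists a.
have [V [[oV _] upV Vp nVa]] := sep _ _ npa.
have [z [[y -> zy] Vz]] := clp V (open_nbhs_nbhs (conj oV Vp)).
exact: nVa (upV _ _ Vz zy).
Qed.

Lemma closed_chain_lower_bound (F C : set T) :
  closed F -> C `<=` F -> C !=set0 -> total_on C le ->
  exists2 p, F p & forall c, C c -> le p c.
Proof.
move=> clF CF [c0 Cc0] Ctot; have [[cT _ _] [le_refl _ le_trans] _] := PS.
pose G := filter_from C (fun c => F `&` downset1 le c).
have FG : Filter G.
  apply: filter_from_filter; first by exists c0.
  move=> c d Cc Cd; have [cd|dc] := Ctot c d Cc Cd.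
  - exists c => // z [Fz [_ -> zc]]; split; split => //; first by exists c.
    by exists d => //; exact: le_trans zc cd.
  - exists d => // z [Fz [_ -> zd]]; split; split => //; last by exists d.
    by exists c => //; exact: le_trans zd dc.
have PG : ProperFilter G.
  apply: filter_from_proper => c Cc; exists c.
  by split; [exact: CF | exists c].
have GT : G setT by exists c0.
have [p [_ clp]] := cT G PG GT.
have inG c : C c -> (F `&` downset1 le c) p.
  move=> Cc; apply: (closedI clF (closed_downset1 c)) => B Bp.
  by apply: clp Bp; exists c.
have [Fp _] := inG c0 Cc0.
by exists p => // c /inG [_ [_ -> pc]].
Qed.

Lemma exists_minimal (F : set T) : closed F -> F !=set0 ->
  exists m, minimal le F m.
Proof.
move=> clF [x0 Fx0]; have [_ [le_refl le_anti le_trans] _] := PS.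
pose S := {z : T | F z}.
pose R : rel S := fun a b => `[< le (sval b) (sval a) >].
have [t tmax] : exists t : S, forall s, R t s -> s = t.
  apply: Zorn.
  - by move=> a; apply/asboolP; exact: le_refl.
  - move=> a b c /asboolP ab /asboolP bc; apply/asboolP.
    exact: le_trans bc ab.
  - move=> a b /asboolP ab /asboolP ba.
    by apply: eq_sig_hprop => //; exact: le_anti.
  move=> A Atot; have [[s0 As0]|A0] := pselect (exists s, A s); last first.
    by exists (exist _ x0 Fx0) => s As; exfalso; apply: A0; exists s.
  have valA_tot : total_on (sval @` A) le.
    move=> _ _ [a Aa <-] [b Ab <-].
    by case: (Atot a b Aa Ab) => /asboolP; [right | left].
  have valAF : sval @` A `<=` F by move=> _ [a _ <-]; exact: svalP.
  have valA0 : sval @` A !=set0 by exists (sval s0), s0.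
  have [p Fp pA] :=
    @closed_chain_lower_bound F (sval @` A) clF valAF valA0 valA_tot.
  by exists (exist _ p Fp) => s As; apply/asboolP; apply: pA; exists s.
exists (sval t); split; first exact: svalP.
by move=> z Fz zt; rewrite -(tmax (exist _ z Fz)) //; exact/asboolP.
Qed.

Lemma exists_minimal_below (F : set T) (x : T) : closed F -> F x ->
  exists2 m, minimal le F m & le m x.
Proof.
move=> clF Fx; have [_ [le_refl _ le_trans] _] := PS.
have clFx := closedI clF (closed_downset1 x).
have [|m [[Fm [_ -> mx]] mmin]] := exists_minimal _ clFx.
  by exists x; split => //; exists x.
exists m => //; split => // z Fz zm; apply: mmin => //; split => //.
by exists x => //; exact: le_trans zm mx.
Qed.

Lemma clopen_scott_upset_Y_compact_open (U : set T) :
  clopen U -> scott_upset le U -> Y_compact_open le (U `&` spatial le).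
Proof.
move=> [oU clU] [_ upU minY]; split; [by move=> ? [] | by exists U | ].
move=> I W WY Wcov; have [g gW] := choice WY.
have og i : open (g i) by have [[]] := gW i.
have gcov : U `<=` \bigcup_i g i.
  move=> x Ux; have [m mmin mx] := exists_minimal_below _ _ clU Ux.
  have [i _ Wim] := Wcov m (conj mmin.1 (minY m mmin)).
  have [_ upg eW] := gW i; rewrite eW in Wim.
  by exists i => //; exact: upg _ _ Wim.1 mx.
have [[cT _ _] _ _] := PS.
have cU : compact U := subclosed_compact clU cT (@subsetT _ U).
have [D fD Dcov] := @compact_finite_subcover T U I g cU og gcov.
exists D => // x [Ux Yx]; have [i Di gix] := Dcov x Ux; exists i => //.
by have [_ _ ->] := gW i.
Qed.

Lemma Y_compact_trace_scott_upset (W : set T) :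
  dense (spatial le) -> clopen W -> is_upset le W ->
  Y_compact le (W `&` spatial le) -> scott_upset le W.
Proof.
move=> dY [oW clW] upW Wc; split => // m [Wm mmin]; apply: contrapT => nYm.
have [_ _ sep] := PS.
pose I := {V : set T | [/\ clopen V, is_upset le V & ~ V m]}.
have IY (i : I) : Y_open le (sval i `&` spatial le).
  by exists (sval i); have [? ? _] := svalP i.
have Icov : W `&` spatial le `<=` \bigcup_(i : I) (sval i `&` spatial le).
  move=> v [Wv Yv]; have nvm : ~ le v m.
    by move=> vm; apply: nYm; rewrite -(mmin v Wv vm).
  have [V [clV upV Vv nVm]] := sep _ _ nvm.
  by exists (exist _ V (And3 clV upV nVm)).
have [D fD Dcov] := Wc I _ IY Icov.
pose O := \bigcup_(i in D) sval i.
have clO : closed O.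
  by apply: (@closed_bigcup T {classic I}) => // i _; have [[]] := svalP i.
have nOm : ~ O m by move=> [i _]; have [] := svalP i.
have [z [[Wz nOz] Yz]] : (W `&` ~` O) `&` spatial le !=set0.
  by apply: dY; [exists m | apply: openI; rewrite ?openC].
have [i Di [Viz _]] := Dcov z (conj Wz Yz).
by apply: nOz; exists i.
Qed.

End PriestleySpace.

Theorem lemma4p10 (T : topologicalType) (le : T -> T -> Prop) :
  SL_space le ->
  forall U : set T,
    (clopen U /\ scott_upset le U) <->
    (exists V : set T, Y_compact_open le V /\ closure V = U).
Proof.
move=> [[PS _ _] dY] U; split.
- move=> [clopenU scottU]; exists (U `&` spatial le); split.
  + exact: clopen_scott_upset_Y_compact_open.
  + exact: closure_clopenI_dense.
- move=> [_ [[_ [W [clopenW upW ->]] Vc] <-]].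
  rewrite closure_clopenI_dense //; split => //.
  by apply: Y_compact_trace_scott_upset => //; exact: closureT_dense.
Qed.
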